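(* Let $\mathcal I,\mathcal O\subset\{1,\dots,K\}$ be disjoint sets of local populations, and let $T>0$ and a partition function $\Theta$ be fixed. Then the degeneracy and complexity satisfy $$\mathcal D_{T,\zeta}(\mathcal I:\mathcal O)\le\mathcal C_{T,\zeta}(\mathcal I:\mathcal O).$$
   Context: Setting: a spiking neuronal network with $K$ local populations whose state evolves as a continuous-time Markov process $X_t$ with unique invariant probability distribution $\pi$; $S_{[0,T)}$ is the random spike train of the network on $[0,T)$ (the finite list of spikes $(t_l,\xi_l)$, $l=1,\dots,Z$, with spike time $t_l$ and spiking neuron $\xi_l$) when $X_0\sim\pi$, and each neuron $\xi$ belongs to a local population $k(\xi)\in\{1,\dots,K\}$. Fix a partition function $\Theta:\mathbb{Z}_{\ge0}\to\{1,\dots,d\}$. For a set $C=\{C_1,\dots,C_{|C|}\}\subset\{1,\dots,K\}$ (with a fixed ordering), define $$\zeta_C(S_{[0,T)})=\sum_{n=1}^{|C|}d^{\,n-1}\,\Theta\Big(\sum_{l=1}^Z\mathbf{1}_{\{k(\xi_l)=C_n\}}\Big),$$ an injective encoding of the vector of coarse-grained spike counts of the populations in $C$; for $C=\emptyset$, $\zeta_\emptyset$ is constant. The coarse-grained entropy is $H_{T,\zeta_C}=-\sum_i p_i\log p_i$ with $p_i=\mathbb{P}_\pi[\zeta_C(S_{[0,T)})=i]$. For disjoint $A,B$, $MI_{T,\zeta}(A:B)=H_{T,\zeta_A}+H_{T,\zeta_B}-H_{T,\zeta_{A\cup B}}$, and for pairwise disjoint $A,B,C$, $$MI_{T,\zeta}(A:B:C)=H_{T,\zeta_A}+H_{T,\zeta_B}+H_{T,\zeta_C}-H_{T,\zeta_{A\cup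 B}}-H_{T,\zeta_{B\cup C}}-H_{T,\zeta_{A\cup C}}+H_{T,\zeta_{A\cup B\cup C}}.$$ Degeneracy and complexity: with the sum over $k=0,\dots,|\mathcal I|$ and over all subsets $\mathcal I_k\subseteq\mathcal I$ of cardinality $k$, and $\mathcal I_k^c=\mathcal I\setminus\mathcal I_k$, $$\mathcal D_{T,\zeta}(\mathcal I:\mathcal O)=\sum_{k=0}^{|\mathcal I|}\frac{1}{2\binom{|\mathcal I|}{k}}\sum_{\mathcal I_k}MI_{T,\zeta}(\mathcal I_k:\mathcal I_k^c:\mathcal O),\qquad \mathcal C_{T,\zeta}(\mathcal I:\mathcal O)=\sum_{k=0}^{|\mathcal I|}\frac{1}{2\binom{|\mathcal I|}{k}}\sum_{\mathcal I_k}MI_{T,\zeta}(\mathcal I_k:\mathcal I_k^c).$$ *)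

From HB Require Import structures.
From mathcomp Require Import all_boot all_order all_algebra.
From mathcomp Require Import all_classical all_reals all_analysis.
Set Implicit Arguments. Unset Strict Implicit. Unset Printing Implicit Defensive.
Import Order.TTheory GRing.Theory Num.Theory.

Local Open Scope ring_scope.
Local Open Scope classical_set_scope.

Definition spike_train (R : realType) (Neuron : Type) := seq (R * Neuron).

Definition pop_count (R : realType) (Neuron : Type) (K : nat)
  (kpop : Neuron -> 'I_K) (k : 'I_K) (s : spike_train R Neuron) : nat :=
  count (fun sp => kpop sp.2 == k) s.

(* zeta_C(S) = sum_{n=1}^{|C|} d^(n-1) Theta(count of population C_n),
   where C_1,...,C_|C| is the fixed ordering [enum C] of C. *)
Definition zeta (R : realType) (Neuron : Type) (K : nat)
  (kpop : Neuron -> 'I_K) (Theta : nat -> nat) (d : nat)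
  (C : {set 'I_K}) (s : spike_train R Neuron) : nat :=
  (\sum_(p <- zip (iota 0 #|C|) (enum C)) d ^ p.1 * Theta (pop_count kpop p.2 s))%N.

Definition zeta_prob (R : realType) (dT : measure_display) (Omega : measurableType dT)
  (P : probability Omega R) (Neuron : Type) (K : nat)
  (kpop : Neuron -> 'I_K) (Theta : nat -> nat) (d : nat)
  (S : Omega -> spike_train R Neuron) (C : {set 'I_K}) (i : nat) : R :=
  fine (P [set w : Omega | zeta kpop Theta d C (S w) = i]).

(* H_{T,zeta_C} = - sum_i p_i log p_i.  zeta_C takes values < (d+1)^(|C|+1),
   so the sum over i < (d+1)^(|C|+1) is the full sum (other p_i vanish). *)
Definition cg_entropy (R : realType) (dT : measure_display) (Omega : measurableType dT)
  (P : probability Omega R) (Neuron : Type) (K : nat)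
  (kpop : Neuron -> 'I_K) (Theta : nat -> nat) (d : nat)
  (S : Omega -> spike_train R Neuron) (C : {set 'I_K}) : R :=
  - \sum_(i < (d.+1) ^ (#|C|).+1)
      (zeta_prob P kpop Theta d S C i * ln (zeta_prob P kpop Theta d S C i)).

Definition MI2 (R : realType) (dT : measure_display) (Omega : measurableType dT)
  (P : probability Omega R) (Neuron : Type) (K : nat)
  (kpop : Neuron -> 'I_K) (Theta : nat -> nat) (d : nat)
  (S : Omega -> spike_train R Neuron) (A B : {set 'I_K}) : R :=
  let H := cg_entropy P kpop Theta d S in
  H A + H B - H (A :|: B).

Definition MI3 (R : realType) (dT : measure_display) (Omega : measurableType dT)
  (P : probability Omega R) (Neuron : Type) (K : nat)
  (kpop : Neuron -> 'I_K) (Theta : nat -> nat) (d : nat)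
  (S : Omega -> spike_train R Neuron) (A B C : {set 'I_K}) : R :=
  let H := cg_entropy P kpop Theta d S in
  H A + H B + H C - H (A :|: B) - H (B :|: C) - H (A :|: C) + H (A :|: B :|: C).

Definition degeneracy (R : realType) (dT : measure_display) (Omega : measurableType dT)
  (P : probability Omega R) (Neuron : Type) (K : nat)
  (kpop : Neuron -> 'I_K) (Theta : nat -> nat) (d : nat)
  (S : Omega -> spike_train R Neuron) (I O : {set 'I_K}) : R :=
  \sum_(k < #|I|.+1) ((2 * 'C(#|I|, k))%:R)^-1 *
     \sum_(Ik in powerset I | #|Ik| == k)
        MI3 P kpop Theta d S Ik (I :\: Ik) O.

Definition complexity (R : realType) (dT : measure_display) (Omega : measurableType dT)
  (P : probability Omega R) (Neuron : Type) (K : nat)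
  (kpop : Neuron -> 'I_K) (Theta : nat -> nat) (d : nat)
  (S : Omega -> spike_train R Neuron) (I O : {set 'I_K}) : R :=
  \sum_(k < #|I|.+1) ((2 * 'C(#|I|, k))%:R)^-1 *
     \sum_(Ik in powerset I | #|Ik| == k)
        MI2 P kpop Theta d S Ik (I :\: Ik).

From HB Require Import structures.
From mathcomp Require Import all_boot all_order all_algebra.
From mathcomp Require Import all_classical all_reals all_analysis.
From mathcomp Require Import ring lra zify.
Set Implicit Arguments. Unset Strict Implicit. Unset Printing Implicit Defensive.
Import Order.TTheory GRing.Theory Num.Theory.

(* MI(A:B) - MI(A:B:C) = H(A u C) + H(B u C) - H(C) - H(A u B u C) is the
   conditional mutual information of A and B given C, hence nonnegative, and
   the inequality D <= C holds term by term.  As zeta_C injectively encodes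
   the Theta-classes of the spike counts of the populations in C, H_{T,zeta_C}
   is the entropy of the partition "same Theta-classes on C" of the finite law
   of the vector of Theta-classes.  For partitions X, Y refining Z, with common
   refinement W, submodularity H(Z) + H(W) <= H(X) + H(Y) follows from
   ln x <= x - 1 applied to x = p_X p_Y / (p_Z p_W). *)

Definition bij_numeral (d : nat) (s : seq nat) : nat :=
  foldr (fun a n => a + d * n) 0 s.

Lemma sum_zip_iota_expn (X : Type) (d : nat) (g : X -> nat) (j : nat) (s : seq X) :
  \sum_(p <- zip (iota j (size s)) s) d ^ p.1 * g p.2
    = d ^ j * bij_numeral d (map g s).
Proof.
elim: s j => [|x s IH] j /=; first by rewrite big_nil muln0.
by rewrite big_cons IH expnS /=; ring.
Qed.

Lemma bij_numeral_inj (d : nat) (s s' : seq nat) :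
    all (fun a => 0 < a <= d) s -> all (fun a => 0 < a <= d) s' ->
  bij_numeral d s = bij_numeral d s' -> s = s'.
Proof.
elim: s s' => [|a s IH] [|b s'] //=; [lia | lia |].
move=> /andP[a_digit s_digits] /andP[b_digit s'_digits] eq_num.
have eq_tail : bij_numeral d s = bij_numeral d s'.
  case: (ltngtP (bij_numeral d s) (bij_numeral d s')) => // lt_num;
    have := leq_mul (leqnn d) lt_num; rewrite mulnS; lia.
by rewrite (IH s') //; congr (_ :: _); move: eq_num; rewrite eq_tail; lia.
Qed.

Lemma bij_numeral_lt (d : nat) (s : seq nat) :
  all (fun a => a <= d) s -> bij_numeral d s < d.+1 ^ size s.
Proof.
elim: s => [|a s IH] //= /andP[a_le s_le].
have := leq_mul (leqnn d.+1) (IH s_le); rewrite expnS; lia.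
Qed.

Local Open Scope ring_scope.

Lemma ln_le_subr1 (R : realType) (x : R) : 0 < x -> ln x <= x - 1.
Proof. by move=> x_gt0; have := expR_ge1Dx (ln x); rewrite lnK ?posrE //; lra. Qed.

Section FiberEntropy.
Variables (R : realType) (T : finType) (q : T -> R).

Definition fiber_mass (U : eqType) (f : T -> U) (t : T) : R :=
  \sum_(t' | f t' == f t) q t'.
Arguments fiber_mass : simpl never.

Definition fiber_entropy (U : eqType) (f : T -> U) : R :=
  - \sum_t q t * ln (fiber_mass f t).

Lemma fiber_mass_eq (U : eqType) (f : T -> U) t t' :
  f t = f t' -> fiber_mass f t = fiber_mass f t'.
Proof. by rewrite /fiber_mass => ->. Qed.

Lemma sum_ord_fiber_mass (N : nat) (f : T -> nat) (F : R -> R) :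
    (forall t, f t < N)%N ->
  \sum_(i < N) (\sum_(t | f t == i) q t) * F (\sum_(t | f t == i) q t) =
  \sum_t q t * F (fiber_mass f t).
Proof.
move=> f_lt.
transitivity (\sum_(i < N) \sum_t
    (if f t == i then q t * F (fiber_mass f t) else 0)).
  apply: eq_bigr => i _; rewrite mulr_suml big_mkcond; apply: eq_bigr => t _.
  by case: eqP => // fti; rewrite /fiber_mass fti.
rewrite exchange_big; apply: eq_bigr => t _; rewrite -big_mkcond /=.
by rewrite (big_pred1 (Ordinal (f_lt t))) // => i; rewrite -val_eqE /= eq_sym.
Qed.

Hypothesis q_ge0 : forall t, 0 <= q t.

Lemma fiber_mass_ge (U : eqType) (f : T -> U) t : q t <= fiber_mass f t.
Proof. by rewrite /fiber_mass (bigD1 t) //= lerDl sumr_ge0. Qed.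

Lemma fiber_mass_ge0 (U : eqType) (f : T -> U) t : 0 <= fiber_mass f t.
Proof. exact: le_trans (q_ge0 t) (fiber_mass_ge f t). Qed.

Variables (UX UY UZ UW : eqType).
Variables (fX : T -> UX) (fY : T -> UY) (fZ : T -> UZ) (fW : T -> UW).
Hypothesis fX_finer : forall t t', fX t = fX t' -> fZ t = fZ t'.
Hypothesis fY_finer : forall t t', fY t = fY t' -> fZ t = fZ t'.
Hypothesis fW_meet :
  forall t t', (fW t == fW t') = (fX t == fX t') && (fY t == fY t').

Let fiber_ratio t :=
  fiber_mass fX t * fiber_mass fY t / (fiber_mass fZ t * fiber_mass fW t).

Lemma ln_fiber_ratio_le t :
  q t * (ln (fiber_mass fX t) + ln (fiber_mass fY t)
         - ln (fiber_mass fZ t) - ln (fiber_mass fW t)) <= q t * fiber_ratio t - q t.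
Proof.
have [->|qt_neq0] := eqVneq (q t) 0; first by rewrite !mul0r subrr.
have qt_gt0 : 0 < q t by rewrite lt_def qt_neq0 q_ge0.
have mass_gt0 (U : eqType) (f : T -> U) : 0 < fiber_mass f t.
  exact: lt_le_trans qt_gt0 (fiber_mass_ge f t).
have := mass_gt0 _ fX; have := mass_gt0 _ fY; have := mass_gt0 _ fZ.
have := mass_gt0 _ fW => pW pZ pY pX.
have -> : ln (fiber_mass fX t) + ln (fiber_mass fY t) - ln (fiber_mass fZ t)
          - ln (fiber_mass fW t) = ln (fiber_ratio t).
  by rewrite /fiber_ratio ln_div ?posrE ?mulr_gt0 // !lnM ?posrE //; ring.
rewrite -[X in _ <= _ - X]mulr1 -mulrBr ler_wpM2l ?q_ge0 //.
by apply: ln_le_subr1; rewrite /fiber_ratio divr_gt0 ?mulr_gt0.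
Qed.

(* The [t] summed over form at most one [fW]-fiber, on which [q / fiber_mass fW]
   sums to at most 1. *)
Lemma sum_meet_fiber_le a b :
  \sum_(t | (fX a == fX t) && (fY b == fY t)) q t / fiber_mass fW t
    <= (fZ a == fZ b)%:R.
Proof.
case: (pickP (fun t => (fX a == fX t) && (fY b == fY t))) => [t0|none]; last first.
  by rewrite big_pred0 ?ler0n.
move=> /andP[/eqP Xa /eqP Yb].
have -> : fZ a == fZ b by rewrite (fX_finer Xa) (fY_finer Yb).
rewrite (eq_bigl (fun t => fW t == fW t0)); last first.
  by move=> t; rewrite fW_meet Xa Yb ![_ == fX t]eq_sym ![_ == fY t]eq_sym.
rewrite (eq_bigr (fun t => q t / fiber_mass fW t0)); last first.
  by move=> t /eqP /fiber_mass_eq ->.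
rewrite -mulr_suml -/(fiber_mass fW t0).
have [->|mass_neq0] := eqVneq (fiber_mass fW t0) 0; first by rewrite mul0r ler01.
by rewrite divff.
Qed.

(* Expand [fiber_mass fX t * fiber_mass fY t] as a double sum over [a] and [b]
   and sum over [t] first. *)
Lemma sum_fiber_ratio_le : \sum_t q t * fiber_ratio t <= \sum_t q t.
Proof.
have expand t : q t * fiber_ratio t = \sum_a \sum_b
    (if (fX a == fX t) && (fY b == fY t)
     then q a * q b / fiber_mass fZ a * (q t / fiber_mass fW t) else 0).
  have -> : q t * fiber_ratio t = fiber_mass fX t * fiber_mass fY t
                            * (q t / (fiber_mass fZ t * fiber_mass fW t)).
    by rewrite /fiber_ratio; ring.
  have mass_mkcond (U : eqType) (f : T -> U) :
      fiber_mass f t = \sum_a (if f a == f t then q a else 0).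
    exact: big_mkcond.
  rewrite (mass_mkcond _ fX) (mass_mkcond _ fY); set c := q t / _.
  rewrite !mulr_suml; apply: eq_bigr => a _; rewrite mulr_sumr mulr_suml.
  apply: eq_bigr => b _; rewrite {}/c.
  case: eqP => Xa; case: eqP => Yb /=; rewrite ?(mul0r, mulr0) //.
  rewrite -(fiber_mass_eq (fX_finer Xa)) invfM; ring.
rewrite (eq_bigr _ (fun t _ => expand t)) exchange_big /=.
apply: ler_sum => a _; rewrite exchange_big /=.
apply: (@le_trans _ _
  (\sum_b q a * q b / fiber_mass fZ a * (fZ a == fZ b)%:R)).
  apply: ler_sum => b _; rewrite -big_mkcond /= -mulr_sumr.
  by rewrite ler_wpM2l ?divr_ge0 ?mulr_ge0 ?q_ge0 ?fiber_mass_ge0 ?sum_meet_fiber_le.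
rewrite (eq_bigr (fun b => q a / fiber_mass fZ a * (if fZ b == fZ a then q b else 0))).
  2: by move=> b _; rewrite eq_sym; case: eqP => _; rewrite ?mulr1 ?mulr0 //; ring.
rewrite -mulr_sumr -big_mkcond /= -/(fiber_mass fZ a).
have [->|mass_neq0] := eqVneq (fiber_mass fZ a) 0; first by rewrite mulr0 q_ge0.
by rewrite divfK.
Qed.

Lemma fiber_entropy_submod :
  fiber_entropy fZ + fiber_entropy fW <= fiber_entropy fX + fiber_entropy fY.
Proof.
have : \sum_t q t * (ln (fiber_mass fX t) + ln (fiber_mass fY t)
                     - ln (fiber_mass fZ t) - ln (fiber_mass fW t)) <= 0.
  apply: le_trans (ler_sum _ (fun t _ => ln_fiber_ratio_le t)) _.
  by rewrite sumrB subr_le0 sum_fiber_ratio_le.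
rewrite /fiber_entropy.
under eq_bigr do rewrite !mulrDr !mulrN.
rewrite !sumrB big_split /=; lra.
Qed.

End FiberEntropy.

Section FiniteLaw.
Variables (R : realType) (dT : measure_display) (Omega : measurableType dT).
Variables (P : probability Omega R) (V : finType) (X : Omega -> V).
Local Open Scope classical_set_scope.

Definition law (v : V) : R := fine (P [set w | X w = v]).

Lemma law_ge0 v : 0 <= law v.
Proof. exact/fine_ge0/measure_ge0. Qed.

Hypothesis X_fiber_measurable : forall v, measurable [set w | X w = v].

Lemma fine_prob_preimage (A : pred V) :
  fine (P [set w | A (X w)]) = \sum_(v | A v) law v.
Proof.
have -> : [set w | A (X w)] =
    \bigcup_(v in [set` [seq v <- index_enum V | A v]]) X @^-1` [set v].
  apply/seteqP; split => w /=.
    by move=> Aw; exists (X w) => //=; rewrite mem_filter Aw mem_index_enum.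
  by case=> v /=; rewrite mem_filter => /andP[Av _] ->.
rewrite measure_fin_bigcup //; last 2 first.
- exact: trivIset_preimage1.
- by move=> v _; exact: X_fiber_measurable.
rewrite -fsbig_seq ?filter_uniq ?index_enum_uniq // big_filter.
by rewrite -sum_fine // => v _; apply: fin_num_measure; exact: X_fiber_measurable.
Qed.

End FiniteLaw.

Section CoarseGrainedCounts.
Variables (K d : nat).

Definition cg_code (C : {set 'I_K}) (t : {ffun 'I_K -> 'I_d}) : nat :=
  bij_numeral d [seq (t k).+1 | k <- enum C].

Lemma cg_code_eq C t t' : cg_code C t = cg_code C t' <-> {in C, t =1 t'}.
Proof.
have digits (u : {ffun 'I_K -> 'I_d}) :
    all (fun a => 0 < a <= d)%N [seq (u k).+1 | k <- enum C].
  by rewrite all_map; apply/allP => k _ /=.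
split => [/bij_numeral_inj eq_digits k kC | eq_t].
  have /eq_in_map/(_ k) := eq_digits (digits t) (digits t').
  by rewrite mem_enum => /(_ kC) [] /val_inj.
by congr bij_numeral; apply/eq_in_map => k; rewrite mem_enum => /eq_t ->.
Qed.

Lemma cg_code_subset (A C : {set 'I_K}) t t' :
  A \subset C -> cg_code C t = cg_code C t' -> cg_code A t = cg_code A t'.
Proof.
by move=> /fintype.subsetP sAC /cg_code_eq eq_t; apply/cg_code_eq => k /sAC /eq_t.
Qed.

Lemma eq_cg_codeU (A B : {set 'I_K}) t t' :
  (cg_code (A :|: B) t == cg_code (A :|: B) t')
    = (cg_code A t == cg_code A t') && (cg_code B t == cg_code B t').
Proof.
apply/eqP/andP => [eq_AB | [/eqP/cg_code_eq eq_A /eqP/cg_code_eq eq_B]].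
  by split; apply/eqP; apply: (cg_code_subset _ eq_AB);
    rewrite ?finset.subsetUl ?finset.subsetUr.
by apply/cg_code_eq => k; rewrite inE => /orP[/eq_A|/eq_B].
Qed.

Lemma cg_code_lt C t : (cg_code C t < d.+1 ^ #|C|.+1)%N.
Proof.
apply: leq_trans (leq_pexp2l _ (leqnSn _)) => //.
rewrite cardE -(size_map (fun k => (t k).+1)); apply: bij_numeral_lt.
by rewrite all_map; apply/allP => k _ /=.
Qed.

End CoarseGrainedCounts.

Section SpikeCounts.
Variables (R : realType) (dT : measure_display) (Omega : measurableType dT).
Variables (P : probability Omega R) (Neuron : Type) (K : nat).
Variables (kpop : Neuron -> 'I_K) (d : nat) (Theta : nat -> nat).
Variable (S : Omega -> spike_train R Neuron).
Local Open Scope classical_set_scope.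
Hypothesis Theta_range : forall n, (1 <= Theta n <= d)%N.
Hypothesis count_measurable : forall (k : 'I_K) (n : nat),
  measurable [set w : Omega | pop_count kpop k (S w) = n].

Lemma Theta_pred_lt n : ((Theta n).-1 < d)%N.
Proof. by have := Theta_range n; lia. Qed.

(* Storing [(Theta n).-1 : 'I_d] makes every [t] a valid digit vector for
   [cg_code], which is thus injective on all of [{ffun 'I_K -> 'I_d}]. *)
Definition cg_counts (w : Omega) : {ffun 'I_K -> 'I_d} :=
  [ffun k => Ordinal (Theta_pred_lt (pop_count kpop k (S w)))].

Lemma zeta_cg_code C w : zeta kpop Theta d C (S w) = cg_code C (cg_counts w).
Proof.
rewrite /zeta cardE (sum_zip_iota_expn _ (fun k => Theta (pop_count kpop k (S w)))).
rewrite expn0 mul1n; congr bij_numeral; apply: eq_map => k.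
by rewrite ffunE /= prednK //; case/andP: (Theta_range (pop_count kpop k (S w))).
Qed.

Lemma cg_counts_fiber_measurable t : measurable [set w | cg_counts w = t].
Proof.
have coord_measurable k (j : 'I_d) : measurable [set w | cg_counts w k = j].
  have -> : [set w | cg_counts w k = j] = \bigcup_(n in [set n | (Theta n).-1 = j])
      [set w | pop_count kpop k (S w) = n].
    apply/seteqP; split => w /=; rewrite ffunE.
      by move=> <-; exists (pop_count kpop k (S w)).
    by case=> n /= Theta_n count_n; apply: val_inj; rewrite /= count_n.
  by apply: bigcup_measurable => n _; exact: count_measurable.
have -> : [set w | cg_counts w = t] =
    \bigcap_(k in [set: 'I_K]) [set w | cg_counts w k = t k].
  apply/seteqP; split => w /=; first by move=> eq_t k _ /=; rewrite eq_t.
  by move=> eq_t; apply/ffunP => k; exact: eq_t.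
by apply: fin_bigcap_measurable => // k _; exact: coord_measurable.
Qed.

Local Notation q := (law P cg_counts).

Lemma cg_entropyE C :
  cg_entropy P kpop Theta d S C = fiber_entropy q (cg_code C).
Proof.
rewrite /cg_entropy /fiber_entropy; congr (- _).
have zeta_probE i : zeta_prob P kpop Theta d S C i = \sum_(t | cg_code C t == i) q t.
  rewrite /zeta_prob -(fine_prob_preimage _ cg_counts_fiber_measurable).
  by congr (fine (P _)); apply/seteqP; split => w /=; rewrite zeta_cg_code => /eqP.
under eq_bigr do rewrite zeta_probE.
by apply: sum_ord_fiber_mass => t; exact: cg_code_lt.
Qed.

Lemma cg_entropy_submod A B C :
  cg_entropy P kpop Theta d S C + cg_entropy P kpop Theta d S (A :|: B :|: C)
  <= cg_entropy P kpop Theta d S (A :|: C) + cg_entropy P kpop Theta d S (B :|: C).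
Proof.
rewrite !cg_entropyE; apply: (fiber_entropy_submod (law_ge0 P cg_counts)).
- by move=> t t'; apply: cg_code_subset; exact: finset.subsetUr.
- by move=> t t'; apply: cg_code_subset; exact: finset.subsetUr.
by move=> t t'; rewrite -eq_cg_codeU finset.setUACA finset.setUid.
Qed.

Lemma MI3_le_MI2 A B C :
  MI3 P kpop Theta d S A B C <= MI2 P kpop Theta d S A B.
Proof. by rewrite /MI3 /MI2 /=; have := cg_entropy_submod A B C; lra. Qed.

End SpikeCounts.

Theorem theorem5p3 (R : realType) (dT : measure_display) (Omega : measurableType dT)
  (P : probability Omega R) (Neuron : Type) (K : nat)
  (kpop : Neuron -> 'I_K) (d : nat) (Theta : nat -> nat)
  (T : R) (S : Omega -> spike_train R Neuron) (I O : {set 'I_K}) :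
  (0 < d)%N ->
  (forall n, (1 <= Theta n <= d)%N) ->
  0 < T ->
  (forall w, all (fun sp => (0 <= sp.1) && (sp.1 < T)) (S w)) ->
  (forall (k : 'I_K) (n : nat),
     measurable [set w : Omega | pop_count kpop k (S w) = n]%classic) ->
  [disjoint I & O] ->
  degeneracy P kpop Theta d S I O <= complexity P kpop Theta d S I O.
Proof.
move=> _ Theta_range _ _ count_measurable _.
apply: ler_sum => k _; apply: ler_wpM2l; first by rewrite invr_ge0 ler0n.
by apply: ler_sum => Ik _; exact: MI3_le_MI2.
Qed.
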